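(* Let $q$ be a prime power and $s$ an odd integer, and let $G$ be an abelian group with $|G|=(q^s+1)(q^{2s}+1)$ which contains a difference set with parameters \[ (v,k,\lambda)=\left(\frac{q^{4s}-1}{q^s-1},\frac{q^{3s}-1}{q^s-1},\frac{q^{2s}-1}{q^s-1}\right). \] Let $\tau$ be the automorphism $\tau:x\mapsto x^{q^4}$ of $G$, and let $G^\tau$ denote the subgroup of fixed points of $\tau$. Let $M$ be any subgroup of $G$ of order $(q+1)(q^2+1)$. Then $M\le G^\tau$. Furthermore, let $b=\gcd(q+1,s)$ and $c=\gcd(q^2+1,s)$; if the Sylow $r$-subgroup of $G$ is cyclic for every prime $r$ dividing $b$ or $c$, then $M=G^\tau$.
   Context: A $(v,k,\lambda)$-difference set in an abelian group $G$ of order $v$ is a $k$-subset $D$ such that every non-identity element of $G$ is of the form $d_1d_2^{-1}$ with $d_1,d_2\in D$ in exactly $\lambda$ ways. *)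

From mathcomp Require Import all_boot all_fingroup all_solvable.
Set Implicit Arguments. Unset Strict Implicit. Unset Printing Implicit Defensive.
Local Open Scope group_scope.

Definition prime_power (q : nat) : Prop :=
  exists p e : nat, [/\ prime p, (0 < e)%N & q = (p ^ e)%N].

Definition difference_set (gT : finGroupType) (G : {set gT}) (D : {set gT})
    (v k lam : nat) : Prop :=
  [/\ #|G| = v, D \subset G, #|D| = k &
      forall g, g \in G -> g != 1 ->
        #|[set p in setX D D | p.1 * p.2^-1 == g]| = lam].

Definition fixed_tau (gT : finGroupType) (G : {set gT}) (q : nat) : {set gT} :=
  [set x in G | x ^+ (q ^ 4) == x].

From mathcomp Require Import all_boot all_fingroup all_solvable all_algebra ring.
Import GRing.Theory Num.Theory.
Set Implicit Arguments. Unset Strict Implicit. Unset Printing Implicit Defensive.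

(* A fixed point of x |-> x ^+ q ^ 4 is an element killed by
   q ^ 4 - 1 = (q - 1)(q + 1)(q ^ 2 + 1), which |M| = (q + 1)(q ^ 2 + 1)
   divides, so M is fixed. For odd s, x ^ s + 1 = (x + 1) c_x with c_x odd and
   c_x = s (mod x + 1), so |G| = |M| c_q c_(q^2). Let S be a Sylow r-subgroup
   of the group F of fixed points. If r does not divide c_q c_(q^2), then |S|
   divides |M|. Otherwise r divides both c_q c_(q^2) and q ^ 4 - 1, which
   forces r to divide gcd(q + 1, s) or gcd(q ^ 2 + 1, s) but not q - 1; then S
   is cyclic, so |S| divides q ^ 4 - 1 and hence |M|. Thus |F| divides |M|. *)

Lemma sqrn_sub1 x : x ^ 2 - 1 = (x - 1) * (x + 1).
Proof. by rewrite -subn_sqr exp1n. Qed.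

Lemma expn4_sub1 q : q ^ 4 - 1 = (q - 1) * ((q + 1) * (q ^ 2 + 1)).
Proof. by rewrite -[4]/(2 * 2) expnM sqrn_sub1 sqrn_sub1 mulnA. Qed.

Lemma dvdn2_add1_sub1 d x : 0 < x -> d %| x + 1 -> d %| x - 1 -> d %| 2.
Proof.
move=> x_gt0 dvd_add dvd_sub.
by have := dvdn_sub dvd_add dvd_sub; rewrite subnBA // -addnA addKn.
Qed.

Lemma dvdn2_sub1_expn_add1 d y m : 0 < y -> d %| y - 1 -> d %| y ^ m + 1 -> d %| 2.
Proof.
move=> y_gt0 /dvdn_trans dvd_sub dvd_add.
apply: (dvdn2_add1_sub1 _ dvd_add); first by rewrite expn_gt0 y_gt0.
by apply: dvd_sub; rewrite -{2}(exp1n m) subn_exp dvdn_mulr.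
Qed.

Lemma dvdn2_add1_sqr_add1 d y : 0 < y -> d %| y + 1 -> d %| y ^ 2 + 1 -> d %| 2.
Proof.
move=> y_gt0 dvd_y dvd_y2.
apply: (dvdn2_add1_sub1 _ dvd_y2); first by rewrite expn_gt0 y_gt0.
by rewrite sqrn_sub1 dvdn_mull.
Qed.

Lemma prime_dvd_odd_ndvd2 r n : prime r -> odd n -> r %| n -> ~~ (r %| 2).
Proof.
move=> r_pr n_odd r_n; apply/negP; rewrite dvdn_prime2 // => /eqP r2.
by move: r_n; rewrite r2 dvdn2 n_odd.
Qed.

Lemma exprB1_sqr (x : int) n :
  exists K : int, ((x - 1) ^+ n = (-1) ^+ n * (1 - n%:R * x) + x ^+ 2 * K)%R.
Proof.
elim: n => [|n [K IH]]; first by exists 0%R; rewrite !expr0; ring.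
exists ((-1) ^+ n * - n%:R + (x - 1) * K)%R.
by rewrite !exprS IH -[n.+1]addn1 natrD; ring.
Qed.

Definition odd_cofactor x s := (x ^ s + 1) %/ (x + 1).

(* With y = x + 1, expanding (y - 1) ^ s modulo y ^ 2 gives
   x ^ s + 1 = s * y (mod y ^ 2) for odd s. *)
Lemma odd_cofactorP x s : odd s ->
  x ^ s + 1 = (x + 1) * odd_cofactor x s /\ odd_cofactor x s = s %[mod x + 1].
Proof.
move=> s_odd; rewrite /odd_cofactor; set y := x + 1.
have [K expK] := exprB1_sqr y%:R s.
have sumE : ((x ^ s + 1)%:R = y%:R * (s%:R + y%:R * K) :> int)%R.
  have xE : (x%:R = y%:R - 1 :> int)%R by rewrite natrD; ring.
  by rewrite natrD natrX xE expK -signr_odd s_odd expr1; ring.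
have y_dvd : y %| x ^ s + 1.
  have : (y%:Z %| (x ^ s + 1)%:Z)%Z by rewrite -!natz sumE dvdz_mulr.
  by rewrite dvdzE.
split; first by rewrite mulnC divnK.
have quoE : (((x ^ s + 1) %/ y)%:R = s%:R + y%:R * K :> int)%R.
  apply: (mulfI (x := y%:R)); first by rewrite pnatr_eq0 /y addn1.
  by rewrite -sumE -natrM mulnC divnK.
have : (((x ^ s + 1) %/ y)%N %% y)%Z = (s %% y)%Z.
  by rewrite -!natz quoE addrC mulrC modzMDl.
by rewrite !modz_nat => -[].
Qed.

Section OddCofactor.

Variables (x s : nat).
Hypothesis s_odd : odd s.

Lemma odd_cofactorE : x ^ s + 1 = (x + 1) * odd_cofactor x s.
Proof. by case: (odd_cofactorP x s_odd). Qed.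

Lemma dvdn_odd_cofactor : odd_cofactor x s %| x ^ s + 1.
Proof. by rewrite odd_cofactorE dvdn_mull. Qed.

Lemma dvdn_odd_cofactor_s d : d %| x + 1 -> d %| odd_cofactor x s -> d %| s.
Proof.
have [_ cofactor_mod] := odd_cofactorP x s_odd.
by move=> d_x; rewrite /dvdn -(modn_dvdm s d_x) -cofactor_mod modn_dvdm.
Qed.

Lemma odd_odd_cofactor : odd (odd_cofactor x s).
Proof.
have [x_odd | x_even] := boolP (odd x).
  have [_ cofactor_mod] := odd_cofactorP x s_odd.
  have two_dvd : 2 %| x + 1 by rewrite dvdn2 oddD x_odd.
  have : odd_cofactor x s %% 2 = s %% 2.
    by rewrite -(modn_dvdm _ two_dvd) cofactor_mod modn_dvdm.
  by rewrite !modn2 s_odd; case: odd.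
have : odd (x ^ s + 1).
  by rewrite oddD oddX (negbTE x_even) orbF; case: s s_odd.
by rewrite odd_cofactorE oddM => /andP[].
Qed.

Lemma prime_dvd_odd_cofactor r : 0 < x -> prime r ->
  r %| odd_cofactor x s -> r %| x ^ 2 - 1 -> r %| gcdn (x + 1) s.
Proof.
move=> x_gt0 r_pr r_c; rewrite sqrn_sub1 Euclid_dvdM // => /orP[r_sub | r_add].
  have r_add := dvdn_trans r_c dvdn_odd_cofactor.
  have := prime_dvd_odd_ndvd2 r_pr odd_odd_cofactor r_c.
  by rewrite (dvdn2_sub1_expn_add1 x_gt0 r_sub r_add).
by rewrite dvdn_gcd r_add (dvdn_odd_cofactor_s r_add r_c).
Qed.

End OddCofactor.

Lemma prime_dvdn_odd_cofactors q s r : 0 < q -> odd s -> prime r ->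
  r %| odd_cofactor q s * odd_cofactor (q ^ 2) s -> r %| q ^ 4 - 1 ->
  (r %| gcdn (q + 1) s) || (r %| gcdn (q ^ 2 + 1) s).
Proof.
move=> q_gt0 s_odd r_pr r_cc r_q4.
have q2_gt0 : 0 < q ^ 2 by rewrite expn_gt0 q_gt0.
have q4E : q ^ 4 - 1 = (q ^ 2) ^ 2 - 1 by rewrite -expnM.
move: r_cc; rewrite Euclid_dvdM // => /orP[r_c | r_c2]; apply/orP; [left | right].
  apply: prime_dvd_odd_cofactor => //; move: r_q4.
  rewrite q4E sqrn_sub1 mulnC Euclid_dvdM // => /orP[r_q2 | //].
  have : ~~ (r %| 2).
    exact: prime_dvd_odd_ndvd2 r_pr (odd_odd_cofactor _ s_odd) r_c.
  apply: contraR => _; apply: (dvdn2_add1_sqr_add1 (y := q ^ s)).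
  - by rewrite expn_gt0 q_gt0.
  - exact: dvdn_trans r_c (dvdn_odd_cofactor _ s_odd).
  - by rewrite -expnM mulnC expnM (odd_cofactorE (q ^ 2) s_odd) dvdn_mulr.
by apply: prime_dvd_odd_cofactor; rewrite -?q4E.
Qed.

(* (q + 1) * (q ^ 2 + 1) is the cyclotomic part Phi_2(q) * Phi_4(q) of q ^ 4 - 1. *)
Lemma pnat_dvdn_Phi2Phi4 q s r a : 0 < q -> odd s -> prime r -> r.-nat a ->
  a %| (q ^ s + 1) * (q ^ (2 * s) + 1) -> (r %| a -> r %| q ^ 4 - 1) ->
  ((r %| gcdn (q + 1) s) || (r %| gcdn (q ^ 2 + 1) s) -> a %| q ^ 4 - 1) ->
  a %| (q + 1) * (q ^ 2 + 1).
Proof.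
move=> q_gt0 s_odd r_pr r_a a_dvd r_q4 a_q4.
set c := odd_cofactor q s; set c2 := odd_cofactor (q ^ 2) s.
have prodE : (q ^ s + 1) * (q ^ (2 * s) + 1) = (q + 1) * (q ^ 2 + 1) * (c * c2).
  by rewrite expnM (odd_cofactorE q s_odd) (odd_cofactorE (q ^ 2) s_odd) mulnACA.
have [k a_eq] := p_natP r_a; case: k a_eq => [-> | k a_eq]; first exact: dvd1n.
have r_a' : r %| a by rewrite a_eq dvdn_exp.
have [r_cc | r_ncc] := boolP (r %| c * c2); last first.
  have a_cop : coprime a (c * c2) by rewrite (pnat_coprime r_a) ?p'natE.
  by rewrite -(Gauss_dvdl _ a_cop) -prodE.
have r_n2 : ~~ (r %| 2).
  by apply: (prime_dvd_odd_ndvd2 r_pr _ r_cc); rewrite oddM !odd_odd_cofactor.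
have r_nq1 : ~~ (r %| q - 1).
  apply: contra r_n2 => r_q1; have : r %| (q ^ s + 1) * (q ^ (2 * s) + 1).
    by rewrite prodE (dvdn_trans r_cc (dvdn_mull _ (dvdnn _))).
  by rewrite Euclid_dvdM // => /orP[] /(dvdn2_sub1_expn_add1 q_gt0 r_q1).
have a_cop : coprime a (q - 1) by rewrite (pnat_coprime r_a) ?p'natE.
rewrite -(Gauss_dvdr _ a_cop) -expn4_sub1 a_q4 //.
exact: prime_dvdn_odd_cofactors q_gt0 s_odd r_pr r_cc (r_q4 r_a').
Qed.

Local Open Scope group_scope.

Section FixedPoints.

Variable gT : finGroupType.

Lemma fixpoints_expgS_Ldiv (A : {set gT}) n :
  [set x in A | x ^+ n.+1 == x] = 'Ldiv_n(A).
Proof. by apply/setP => x; rewrite !inE expgSr eq_mulgV1 mulgK. Qed.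

Lemma fixed_tau_Ldiv (G : {set gT}) q : 0 < q -> fixed_tau G q = 'Ldiv_(q ^ 4 - 1)(G).
Proof.
by move=> q_gt0; rewrite /fixed_tau -fixpoints_expgS_Ldiv subn1 prednK // expn_gt0 q_gt0.
Qed.

Lemma sub_Ldiv_exponent (H A : {set gT}) n :
  H \subset A -> exponent H %| n -> H \subset 'Ldiv_n(A).
Proof.
move=> sHA /exponentP expH; apply/subsetP => x Hx; apply/LdivP.
by split; [apply: subsetP Hx | apply: expH].
Qed.

Lemma card_dvdn_Sylows (L : {group gT}) m :
  (forall r (S : {group gT}), prime r -> r.-Sylow(L) S -> #|S| %| m) -> #|L| %| m.
Proof.
move=> dvd_Sylow; apply/dvdn_partP => // r; rewrite mem_primes => /and3P[r_pr _ _].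
have [S sylS] := Sylow_exists r L.
by rewrite -(card_Hall sylS) (dvd_Sylow r S).
Qed.

End FixedPoints.

Theorem lemma4p1 (q s : nat) (gT : finGroupType) (G M : {group gT}) (D : {set gT}) :
  prime_power q -> odd s -> abelian G ->
  #|G| = ((q ^ s + 1) * (q ^ (2 * s) + 1))%N ->
  difference_set G D ((q ^ (4 * s) - 1) %/ (q ^ s - 1))
                     ((q ^ (3 * s) - 1) %/ (q ^ s - 1))
                     ((q ^ (2 * s) - 1) %/ (q ^ s - 1)) ->
  M \subset G -> #|M| = ((q + 1) * (q ^ 2 + 1))%N ->
  M \subset fixed_tau G q /\
  ((forall (r : nat) (P : {group gT}), prime r ->
       (r %| gcdn (q + 1) s)%N || (r %| gcdn (q ^ 2 + 1) s)%N ->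
       r.-Sylow(G) P -> cyclic P) ->
   M :=: fixed_tau G q).
Proof.
move=> [p [e [p_pr _ q_eq]]] s_odd abG cardG _ sMG cardM.
have q_gt0 : 0 < q by rewrite q_eq expn_gt0 prime_gt0.
rewrite fixed_tau_Ldiv //; set n := q ^ 4 - 1.
have sML : M \subset 'Ldiv_n(G).
  apply: (sub_Ldiv_exponent sMG (dvdn_trans (exponent_dvdn M) _)).
  by rewrite cardM /n expn4_sub1 dvdn_mull.
split => // cyclic_Sylows.
apply/eqP; rewrite eqEcard sML (dvdn_leq (cardG_gt0 M)) //= cardM.
apply: (card_dvdn_Sylows (L := Group (group_Ldiv n abG))) => r S r_pr sylS.
have sSL := pHall_sub sylS; have rS := pHall_pgroup sylS.
have sSG : S \subset G := subset_trans sSL (subsetIl _ _).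
have expS : exponent S %| n by apply/exponentP => x /(subsetP sSL) /LdivP[].
apply: (pnat_dvdn_Phi2Phi4 q_gt0 s_odd r_pr rS).
- by rewrite -cardG cardSg.
- by move=> /(Cauchy r_pr)[x Sx <-]; apply: dvdn_trans (dvdn_exponent Sx) expS.
- move=> r_gcd; have [P sylP sSP] := Sylow_superset sSG rS.
  by rewrite -(exponent_cyclic (cyclicS sSP (cyclic_Sylows r P r_pr r_gcd sylP))).
Qed.
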